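(* Let $\Omega$ be a non-degenerate quadratic form on $\mathbb{R}^3$ which is either positive definite (spherical/elliptic geometry on $P(\mathbb{R}^3)$) or of signature $(-,+,+)$ (hyperbolic geometry in the interior of the conic $\Omega=0$). Let $p_1,\dots,p_6$ be the vertices of a hexagon in this geometry, with sides $\ell_i=p_ip_{i+1}$ (indices mod $6$). For $i=1,2,3$ let $m_i$ be the common perpendicular of the opposite sides $\ell_i$ and $\ell_{i+3}$, i.e. the line through the absolute poles $\ell_i^\circ$ and $\ell_{i+3}^\circ$. Then the three lines $m_1,m_2,m_3$ pass through one point if and only if the six vertices $p_1,\dots,p_6$ lie on a conic.
   Context: The absolute polarity sends a point $[v]\in P(\mathbb{R}^3)$ to the line $\{[w]:\Omega(v,w)=0\}$ (its polar $v^\circ$) and a line to its pole (the point whose polar it is). In Cayley–Klein geometry with absolute $\Omega$, the common perpendicular of two lines is the line joining their poles. *)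

(* Real projective plane P(R^3), points = nonzero row vectors. *)
From HB Require Import structures.
From mathcomp Require Import all_boot all_order all_algebra.
From mathcomp Require Import reals.
Set Implicit Arguments. Unset Strict Implicit. Unset Printing Implicit Defensive.
Import Order.TTheory GRing.Theory Num.Theory.
Local Open Scope ring_scope.

Section Defs.
Variable R : realType.

Definition bform (A : 'M[R]_3) (u v : 'rV[R]_3) : R := (u *m A *m v^T) 0 0.

Definition pos_def (A : 'M[R]_3) : Prop :=
  forall v : 'rV[R]_3, v != 0 -> 0 < bform A v v.

Definition sig_mpp (A : 'M[R]_3) : Prop :=
  exists P : 'M[R]_3, P \in unitmx /\
    P^T *m A *m P = diag_mx (\row_(i < 3) (if i == 0 then -1 else 1)).

(* u and v represent distinct points of P(R^3) (linearly independent) *)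
Definition indep2 (u v : 'rV[R]_3) : Prop :=
  forall a b : R, a *: u + b *: v = 0 -> a = 0 /\ b = 0.

Definition on_line (u v x : 'rV[R]_3) : Prop :=
  exists a b : R, x = a *: u + b *: v.

Definition same_line (u v u' v' : 'rV[R]_3) : Prop :=
  on_line u v u' /\ on_line u v v'.

(* [q] is the pole of the line uv: its polar q° = {[w] : Omega(q,w)=0} is uv *)
Definition is_pole (A : 'M[R]_3) (u v q : 'rV[R]_3) : Prop :=
  q != 0 /\ forall w : 'rV[R]_3, bform A q w = 0 <-> on_line u v w.

Definition sh (k : nat) (i : 'I_6) : 'I_6 := inord ((i + k) %% 6).

Definition concurrent (u1 v1 u2 v2 u3 v3 : 'rV[R]_3) : Prop :=
  exists x : 'rV[R]_3, x != 0 /\ on_line u1 v1 x /\ on_line u2 v2 x /\ on_line u3 v3 x.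

Definition on_conic (p : 'I_6 -> 'rV[R]_3) : Prop :=
  exists C : 'M[R]_3, C^T = C /\ C != 0 /\ forall i, bform C (p i) (p i) = 0.

End Defs.

From HB Require Import structures.
From mathcomp Require Import all_boot all_order all_algebra.
From mathcomp Require Import reals.
From mathcomp Require Import ring.
Import Order.TTheory GRing.Theory Num.Theory.
Local Open Scope ring_scope.

(* The pole of the line through [u] and [v] is [(u × v) A^-1], so the line
   through the poles of two lines is the polar of their intersection point.
   Hence m_1, m_2, m_3 are the polars of the intersection points X_1, X_2, X_3
   of opposite sides, and they are concurrent iff X_1, X_2, X_3 are collinear.
   By Pascal's theorem and its converse this happens iff the vertices lie on a
   conic; algebraically, the 6x6 determinant of the Veronese images of the
   vertices equals det [X_1; X_2; X_3]. *)

Set Implicit Arguments.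
Unset Strict Implicit.

Lemma shD m n i : sh m (sh n i) = sh (n + m) i.
Proof. by rewrite /sh inordK ?ltn_pmod // modnDml addnA. Qed.

Lemma sh_zero (i : 'I_6) : sh i 0 = i.
Proof. by rewrite /sh /= add0n modn_small // inord_val. Qed.

Lemma ord3 (j : 'I_3) : j = 0 \/ j = 1 \/ j = 2.
Proof. by case: j => [[|[|[|//]]] ?]; [left|right; left|right; right]; apply/val_inj. Qed.

Lemma ord6 (j : 'I_6) : j = 0 \/ j = 1 \/ j = 2 \/ j = 3 \/ j = 4 \/ j = 5.
Proof.
case: j => [[|[|[|[|[|[|//]]]]]] ?];
  [left|do 1 right; left|do 2 right; left|do 3 right; left|do 4 right; left|do 5 right];
  exact/val_inj.
Qed.

Lemma sum3 (V : nmodType) (F : 'I_3 -> V) : \sum_(j < 3) F j = F 0 + F 1 + F 2.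
Proof.
by rewrite !big_ord_recr big_ord0 /= add0r; congr (F _ + F _ + F _); apply/val_inj.
Qed.

Lemma sum6 (V : nmodType) (F : 'I_6 -> V) :
  \sum_(j < 6) F j = F 0 + F 1 + F 2 + F 3 + F 4 + F 5.
Proof.
rewrite !big_ord_recr big_ord0 /= add0r.
by congr (F _ + F _ + F _ + F _ + F _ + F _); apply/val_inj.
Qed.

Section Coordinates.
Variable R : comNzRingType.
Implicit Types (a b c u v w x : 'rV[R]_3).

Definition row3 (r0 r1 r2 : R) : 'rV[R]_3 := \row_k [:: r0; r1; r2]`_k.

Lemma row3P u v : u 0 0 = v 0 0 -> u 0 1 = v 0 1 -> u 0 2 = v 0 2 -> u = v.
Proof. by move=> h0 h1 h2; apply/rowP => j; case: (ord3 j) => [|[|]] ->. Qed.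

Lemma row3E u : u = row3 (u 0 0) (u 0 1) (u 0 2).
Proof. by apply: row3P; rewrite mxE. Qed.

Definition dot u v : R := (u *m v^T) 0 0.

Definition cross u v : 'rV[R]_3 :=
  row3 (u 0 1 * v 0 2 - u 0 2 * v 0 1)
       (u 0 2 * v 0 0 - u 0 0 * v 0 2)
       (u 0 0 * v 0 1 - u 0 1 * v 0 0).

Definition rows3 a b c : 'M[R]_3 := \matrix_i [:: a; b; c]`_i.

Lemma dotE u v : dot u v = u 0 0 * v 0 0 + u 0 1 * v 0 1 + u 0 2 * v 0 2.
Proof. by rewrite /dot mxE sum3 !mxE. Qed.

Lemma dot_row3 (r0 r1 r2 s0 s1 s2 : R) :
  dot (row3 r0 r1 r2) (row3 s0 s1 s2) = r0 * s0 + r1 * s1 + r2 * s2.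
Proof. by rewrite dotE !mxE. Qed.

Lemma cross_row3 (r0 r1 r2 s0 s1 s2 : R) :
  cross (row3 r0 r1 r2) (row3 s0 s1 s2) =
  row3 (r1 * s2 - r2 * s1) (r2 * s0 - r0 * s2) (r0 * s1 - r1 * s0).
Proof. by rewrite /cross !mxE. Qed.

Lemma crossr0 u : cross u 0 = 0.
Proof. by apply: row3P; rewrite !mxE /= ?mxE; ring. Qed.

Lemma cross_cross a b c : cross a (cross b c) = dot a c *: b - dot a b *: c.
Proof. by apply: row3P; rewrite !mxE /= !dotE; ring. Qed.

Lemma mulmx_rows3 w a b c : w *m rows3 a b c = w 0 0 *: a + w 0 1 *: b + w 0 2 *: c.
Proof. by rewrite mulmx_sum_row sum3 !rowK. Qed.

Lemma mulmx_tr_rows3_eq0 w a b c :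
  w *m (rows3 a b c)^T = 0 <-> [/\ dot w a = 0, dot w b = 0 & dot w c = 0].
Proof.
have entry i : (w *m (rows3 a b c)^T) 0 i = dot w [:: a; b; c]`_i.
  by rewrite /dot !mxE; apply: eq_bigr => k _; rewrite !mxE.
split=> [wM0 | [wa wb wc]].
  by split; [move: (entry 0) | move: (entry 1) | move: (entry 2)]; rewrite wM0 mxE => <-.
by apply/rowP => i; rewrite entry mxE; case: (ord3 i) => [|[|]] ->.
Qed.

(* Cofactor expansion along the first row, on nat-indexed entries so that
   determinants of concrete size reduce by computation. *)
Fixpoint laplace (n : nat) (f : nat -> nat -> R) : R :=
  if n is n'.+1 then
    foldr (fun k s => (-1) ^+ k * f 0%N k * laplace n' (fun i j => f i.+1 (bump k j)) + s)
      0 (iota 0 n)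
  else 1.

Lemma laplaceS n f : laplace n.+1 f =
  \sum_(0 <= k < n.+1) (-1) ^+ k * f 0%N k * laplace n (fun i j => f i.+1 (bump k j)).
Proof. by rewrite unlock. Qed.

Lemma det_laplace n (f : nat -> nat -> R) :
  \det (\matrix_(i < n, j < n) f i j) = laplace n f.
Proof.
elim: n f => [|n IHn] f; first by rewrite det_mx00.
rewrite (expand_det_row _ ord0) laplaceS big_mkord; apply: eq_bigr => k _.
rewrite /cofactor mxE add0n -IHn mulrCA mulrA; congr (_ * \det _).
by apply/matrixP => i j; rewrite !mxE.
Qed.

Lemma det_rows3 a b c : \det (rows3 a b c) = dot a (cross b c).
Proof.
pose f i j := [:: a; b; c]`_i 0 (inord j).
have -> : rows3 a b c = \matrix_(i < 3, j < 3) f i j.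
  by apply/matrixP => i j; rewrite !mxE /f inord_val.
have inord3 : ((inord 0 : 'I_3) = 0) * ((inord 1 : 'I_3) = 1) * ((inord 2 : 'I_3) = 2).
  by do !split; apply/val_inj; rewrite /= inordK.
by rewrite (det_laplace _ f) /f /= !inord3 dotE !mxE /=; ring.
Qed.

Definition veronese x (k : nat) : R :=
  [:: x 0 0 * x 0 0; x 0 1 * x 0 1; x 0 2 * x 0 2;
      x 0 0 * x 0 1; x 0 0 * x 0 2; x 0 1 * x 0 2]`_k.

Lemma laplace_veronese (x : nat -> 'rV[R]_3) :
  laplace 6 (fun k i => veronese (x i) k) =
  \det (rows3 (cross (cross (x 0%N) (x 1%N)) (cross (x 3%N) (x 4%N)))
              (cross (cross (x 1%N) (x 2%N)) (cross (x 4%N) (x 5%N)))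
              (cross (cross (x 2%N) (x 3%N)) (cross (x 5%N) (x 0%N)))).
Proof.
rewrite det_rows3 /veronese /=.
rewrite [in RHS](row3E (x 0%N)) [in RHS](row3E (x 1%N)) [in RHS](row3E (x 2%N)).
rewrite [in RHS](row3E (x 3%N)) [in RHS](row3E (x 4%N)) [in RHS](row3E (x 5%N)).
rewrite !cross_row3 dot_row3.
ring.
Qed.

Definition conic_mx (p : 'I_6 -> 'rV[R]_3) : 'M[R]_6 :=
  \matrix_(k < 6, i < 6) veronese (p i) k.

Definition side (p : 'I_6 -> 'rV[R]_3) (i : 'I_6) : 'rV[R]_3 := cross (p i) (p (sh 1 i)).

Definition opposite_meet (p : 'I_6 -> 'rV[R]_3) (i : 'I_6) : 'rV[R]_3 :=
  cross (side p i) (side p (sh 3 i)).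

Lemma det_conic_mx p : \det (conic_mx p) =
  \det (rows3 (opposite_meet p 0) (opposite_meet p (sh 1 0)) (opposite_meet p (sh 2 0))).
Proof.
have -> : conic_mx p = \matrix_(k < 6, i < 6) veronese (p (sh i 0)) k.
  by apply/matrixP => k i; rewrite !mxE sh_zero.
rewrite (det_laplace _ (fun k i => veronese (p (sh i 0)) k)) laplace_veronese.
(* [inord] does not reduce, so write [0] as [sh 0 0]; all indices then agree
   by computation. *)
by rewrite /opposite_meet /side -(sh_zero 0) !shD.
Qed.

End Coordinates.

Section Geometry.
Variable R : realType.
Implicit Types (A : 'M[R]_3) (u v x y : 'rV[R]_3).

Lemma dot_self_eq0 u : dot u u = 0 -> u = 0.
Proof.
rewrite dotE -!expr2 => /eqP.
rewrite paddr_eq0 ?addr_ge0 ?sqr_ge0 // paddr_eq0 ?sqr_ge0 // !sqrf_eq0.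
by case/andP => /andP[/eqP u0 /eqP u1] /eqP u2; apply: row3P; rewrite mxE.
Qed.

Lemma cross_neq0 u v : indep2 u v -> cross u v != 0.
Proof.
move=> uv; apply/eqP => uxv0.
have [_ /eqP] : dot u v = 0 /\ - dot u u = 0.
  by apply: uv; rewrite scaleNr -cross_cross uxv0 crossr0.
rewrite oppr_eq0 => /eqP/dot_self_eq0 u0.
have [/eqP] : 1 = 0 :> R /\ 0 = 0 :> R by apply: uv; rewrite u0 scaler0 scale0r addr0.
by rewrite oner_eq0.
Qed.

Lemma on_line_cross u v x : indep2 u v -> on_line u v x <-> dot x (cross u v) = 0.
Proof.
move=> uv; split=> [[a [b ->]]|]; first by rewrite dotE !mxE /=; ring.
rewrite -det_rows3 => /eqP/det0P [w w_neq0]; rewrite mulmx_rows3 => wx0.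
have w0 : w 0 0 != 0.
  apply: contra w_neq0 => /eqP w0; apply/eqP.
  have [w1 w2] : w 0 1 = 0 /\ w 0 2 = 0.
    by apply: uv; rewrite -wx0 w0 scale0r add0r.
  by apply: row3P; rewrite mxE.
exists (- (w 0 1 / w 0 0)), (- (w 0 2 / w 0 0)).
apply: (scalerI w0); rewrite scalerDr !scalerA !mulrN !(mulrC (w 0 0)) !divfK //.
by apply/eqP; rewrite !scaleNr -opprD -addr_eq0 addrA wx0.
Qed.

Lemma dotr_comb y (a b : R) u v : dot y (a *: u + b *: v) = a * dot y u + b * dot y v.
Proof. by rewrite !dotE !mxE; ring. Qed.

Lemma dotr0 y : dot y 0 = 0.
Proof. by rewrite /dot trmx0 mulmx0 mxE. Qed.

Lemma indep_cross u1 u2 u3 u4 : indep2 u1 u2 -> indep2 u3 u4 ->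
  ~ same_line u1 u2 u3 u4 -> indep2 (cross u1 u2) (cross u3 u4).
Proof.
move=> h12 h34 not_same a b ab0.
have [a0|a_neq0] := eqVneq a 0.
  move: ab0; rewrite a0 scale0r add0r => /eqP.
  by rewrite scaler_eq0 (negPf (cross_neq0 h34)) orbF => /eqP.
have on12 y : dot y (cross u3 u4) = 0 -> on_line u1 u2 y.
  move=> y34; apply/(on_line_cross _ h12)/eqP.
  have := dotr0 y; rewrite -ab0 dotr_comb y34 mulr0 addr0 => /eqP.
  by rewrite mulf_eq0 (negPf a_neq0).
by case: not_same; split; apply: on12; rewrite dotE !mxE /=; ring.
Qed.

Lemma on_line_mulmx A u v x : A \in unitmx ->
  on_line (u *m A) (v *m A) (x *m A) <-> on_line u v x.
Proof.
move=> uA; split=> [[a [b xA]]|[a [b ->]]]; last by exists a, b; rewrite mulmxDl -!scalemxAl.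
by exists a, b; apply: (can_inj (mulmxK uA)); rewrite xA mulmxDl -!scalemxAl.
Qed.

Lemma on_line_scale (l1 l2 : R) u v x : l1 != 0 -> l2 != 0 ->
  on_line (l1 *: u) (l2 *: v) x <-> on_line u v x.
Proof.
move=> l1_neq0 l2_neq0; split=> [[a [b ->]]|[a [b ->]]].
  by exists (a * l1), (b * l2); rewrite !scalerA.
by exists (a / l1), (b / l2); rewrite !scalerA !divfK.
Qed.

Lemma is_pole_cross A u v q : A \in unitmx -> indep2 u v -> is_pole A u v q ->
  exists2 l, l != 0 & q *m A = l *: cross u v.
Proof.
move=> uA uv [q_neq0 polar].
set r := q *m A; set w := cross u v.
have r_neq0 : r != 0.
  by apply: contra q_neq0 => /eqP r0; rewrite -(mulmxK uA q) -/r r0 mul0mx.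
have ru : dot r u = 0 by apply/polar; exists 1, 0; rewrite scale1r scale0r addr0.
have rv : dot r v = 0 by apply/polar; exists 0, 1; rewrite scale1r scale0r add0r.
have ww : dot w w != 0 by apply: contra (cross_neq0 uv) => /eqP/dot_self_eq0/eqP.
have rw : cross r w = 0 by rewrite cross_cross ru rv !scale0r subr0.
have wr : dot w w *: r = dot w r *: w.
  by apply/eqP; rewrite -subr_eq0 -cross_cross rw crossr0.
exists (dot w r / dot w w).
  rewrite mulf_neq0 ?invr_eq0 //; apply: contra r_neq0 => /eqP wr0.
  by rewrite -(scalerK ww r) wr wr0 !scale0r scaler0.
by rewrite -{1}(scalerK ww r) wr scalerA mulrC.
Qed.

Lemma on_line_poles A u1 u2 u3 u4 q1 q2 x : A \in unitmx ->
  indep2 u1 u2 -> indep2 u3 u4 -> ~ same_line u1 u2 u3 u4 ->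
  is_pole A u1 u2 q1 -> is_pole A u3 u4 q2 ->
  on_line q1 q2 x <-> bform A x (cross (cross u1 u2) (cross u3 u4)) = 0.
Proof.
move=> uA h12 h34 not_same pole1 pole2.
have [l1 l1_neq0 q1A] := is_pole_cross uA h12 pole1.
have [l2 l2_neq0 q2A] := is_pole_cross uA h34 pole2.
rewrite -(on_line_mulmx _ _ _ uA) q1A q2A on_line_scale //.
exact: on_line_cross (indep_cross h12 h34 not_same).
Qed.

Lemma concurrent_polars A (u1 v1 u2 v2 u3 v3 a1 a2 a3 : 'rV[R]_3) : A \in unitmx ->
  (forall x, on_line u1 v1 x <-> bform A x a1 = 0) ->
  (forall x, on_line u2 v2 x <-> bform A x a2 = 0) ->
  (forall x, on_line u3 v3 x <-> bform A x a3 = 0) ->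
  concurrent u1 v1 u2 v2 u3 v3 <-> \det (rows3 a1 a2 a3) = 0.
Proof.
move=> uA m1 m2 m3; rewrite -det_tr; split.
  move=> [x [x_neq0 [/m1 xa1 [/m2 xa2 /m3 xa3]]]].
  apply/eqP/det0P; exists (x *m A); last exact/mulmx_tr_rows3_eq0.
  by apply: contra x_neq0 => /eqP xA0; rewrite -(mulmxK uA x) xA0 mul0mx.
move=> /eqP/det0P [y y_neq0 /mulmx_tr_rows3_eq0 [ya1 ya2 ya3]].
exists (y *m invmx A); split.
  by apply: contra y_neq0 => /eqP yA0; rewrite -(mulmxKV uA y) yA0 mul0mx.
by split; [apply/m1 | split; [apply/m2 | apply/m3]]; rewrite /bform mulmxKV.
Qed.

End Geometry.

Section Conics.
Variable R : realType.

Definition quad (c : 'rV[R]_6) (x : 'rV[R]_3) : R := \sum_(k < 6) c 0 k * veronese x k.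

Lemma mulmx_conic_mx (c : 'rV[R]_6) (p : 'I_6 -> 'rV[R]_3) :
  c *m conic_mx p = \row_i quad c (p i).
Proof. by apply/rowP => i; rewrite !mxE; apply: eq_bigr => k _; rewrite mxE. Qed.

Definition conic_coef (C : 'M[R]_3) : 'rV[R]_6 :=
  \row_k [:: C 0 0; C 1 1; C 2 2; C 0 1 *+ 2; C 0 2 *+ 2; C 1 2 *+ 2]`_k.

Definition conic_of_coef (c : 'rV[R]_6) : 'M[R]_3 :=
  \matrix_(i, j) (nth [::] [:: [:: c 0 0; c 0 3 / 2; c 0 4 / 2];
                               [:: c 0 3 / 2; c 0 1; c 0 5 / 2];
                               [:: c 0 4 / 2; c 0 5 / 2; c 0 2]] i)`_j.

Lemma conic_of_coef_sym (c : 'rV[R]_6) : (conic_of_coef c)^T = conic_of_coef c.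
Proof.
apply/matrixP => i j; rewrite !mxE.
by case: (ord3 i) => [|[|]] ->; case: (ord3 j) => [|[|]] ->.
Qed.

Lemma conic_of_coef0 : conic_of_coef 0 = 0.
Proof.
apply/matrixP => i j; rewrite !mxE.
by case: (ord3 i) => [|[|]] ->; case: (ord3 j) => [|[|]] -> /=; rewrite ?mxE ?mul0r.
Qed.

Lemma conic_of_coefK (c : 'rV[R]_6) : conic_coef (conic_of_coef c) = c.
Proof.
apply/rowP => k; rewrite !mxE.
by case: (ord6 k) => [|[|[|[|[|]]]]] -> /=; rewrite ?mxE /= //; field.
Qed.

Lemma conic_coefK (C : 'M[R]_3) : C^T = C -> conic_of_coef (conic_coef C) = C.
Proof.
move=> CT; have sym i j : C j i = C i j by rewrite -[in LHS]CT mxE.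
apply/matrixP => i j; rewrite !mxE.
by case: (ord3 i) => [|[|]] ->; case: (ord3 j) => [|[|]] -> /=;
  rewrite ?mxE /= ?(sym 0 1) ?(sym 0 2) ?(sym 1 2) //; field.
Qed.

Lemma bform_conic_coef (C : 'M[R]_3) (x : 'rV[R]_3) :
  C^T = C -> bform C x x = quad (conic_coef C) x.
Proof.
move=> CT; have sym i j : C j i = C i j by rewrite -[in LHS]CT mxE.
rewrite /bform /quad sum6 mxE sum3 !mxE !sum3 /veronese /= (sym 0 1) (sym 0 2) (sym 1 2).
ring.
Qed.

Lemma on_conic_det (p : 'I_6 -> 'rV[R]_3) : on_conic p <-> \det (conic_mx p) = 0.
Proof.
split=> [[C [CT [C_neq0 pC]]]|/eqP/det0P [c c_neq0 cp0]].
  apply/eqP/det0P; exists (conic_coef C).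
    by apply: contra C_neq0 => /eqP c0; rewrite -(conic_coefK CT) c0 conic_of_coef0.
  by rewrite mulmx_conic_mx; apply/rowP => i; rewrite !mxE -bform_conic_coef.
exists (conic_of_coef c); split; first exact: conic_of_coef_sym.
split.
  apply: contra c_neq0 => /eqP c0.
  by rewrite -(conic_of_coefK c) c0 -conic_of_coef0 conic_of_coefK.
move=> i; rewrite bform_conic_coef ?conic_of_coef_sym // conic_of_coefK.
by have := congr1 (fun M : 'rV[R]_6 => M 0 i) cp0; rewrite mulmx_conic_mx !mxE.
Qed.

End Conics.

Theorem mainTheorem2 (R : realType) (A : 'M[R]_3)
  (p q : 'I_6 -> 'rV[R]_3) :
  A^T = A -> \det A != 0 ->
  (pos_def A \/ (sig_mpp A /\ forall i, bform A (p i) (p i) < 0)) ->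
  (forall i, p i != 0) ->
  (forall i, indep2 (p i) (p (sh 1 i))) ->
  (forall i, ~ same_line (p i) (p (sh 1 i)) (p (sh 3 i)) (p (sh 4 i))) ->
  (forall i, is_pole A (p i) (p (sh 1 i)) (q i)) ->
  (concurrent (q 0) (q (sh 3 0)) (q (sh 1 0)) (q (sh 4 0))
              (q (sh 2 0)) (q (sh 5 0))
   <-> on_conic p).
Proof.
move=> _ detA _ _ indep not_same pole.
have uA : A \in unitmx by rewrite unitmxE unitfE.
have polar i x : on_line (q i) (q (sh 3 i)) x <-> bform A x (opposite_meet p i) = 0.
  apply: (on_line_poles x uA (indep i) (indep (sh 3 i)) _ (pole i) (pole (sh 3 i))).
  by rewrite shD; apply: not_same.
rewrite on_conic_det det_conic_mx -(shD 3 1) -(shD 3 2).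
exact: (concurrent_polars uA (polar 0) (polar (sh 1 0)) (polar (sh 2 0))).
Qed.
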